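(* Let $M=(\mathbf{K}^{\mathbf{n}},\rho)$ be a sum-matroid of rank $k=\rho(\mathbf{K}^{\mathbf{n}})$, let $n=n_1+\cdots+n_\ell$, and let $d_i=d^S_i(M)$ for $i=1,\dots,\eta(\mathbf{K}^{\mathbf{n}})=n-k$ be its generalized weights. Then $d_1<d_2<\cdots<d_{n-k}$.
   Context: $\ell,n_1,\dots,n_\ell$ positive integers, $K_1,\dots,K_\ell$ finite fields. $\mathcal{P}(\mathbf{K}^{\mathbf{n}})=\mathcal{P}(K_1^{n_1})\times\cdots\times\mathcal{P}(K_\ell^{n_\ell})$, $\mathcal{P}(K_i^{n_i})$ the lattice of $K_i$-subspaces of $K_i^{n_i}$, with componentwise inclusion, sum and intersection; $\mathrm{Rk}(\mathcal{L})=\sum_i\dim_{K_i}\mathcal{L}_i$; $\mathbf{K}^{\mathbf{n}}=(K_1^{n_1},\dots,K_\ell^{n_\ell})$. A sum-matroid is $(\mathbf{K}^{\mathbf{n}},\rho)$ with $\rho:\mathcal{P}(\mathbf{K}^{\mathbf{n}})\to\mathbb{Z}_{\ge0}$ satisfying (R1) $0\le\rho(\mathcal{L})\le\mathrm{Rk}(\mathcal{L})$; (R2) $\mathcal{L}\subseteq\mathcal{L}'\Rightarrow\rho(\mathcal{L})\le\rho(\mathcal{L}')$; (R3) $\rho(\mathcal{L}+\mathcal{L}')+\rho(\mathcal{L}\cap\mathcal{L}')\le\rho(\mathcal{L})+\rho(\mathcal{L}')$. Nullity: $\eta(\mathcal{L})=\mathrm{Rk}(\mathcal{L})-\rho(\mathcal{L})$.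 Generalized weights: $d^S_i(M)=\min\{\mathrm{Rk}(\mathcal{L}):\eta(\mathcal{L})=i\}$ for $i=1,\dots,\eta(\mathbf{K}^{\mathbf{n}})$. *)

From HB Require Import structures.
From mathcomp Require Import all_boot all_order all_algebra all_field.
Set Implicit Arguments. Unset Strict Implicit. Unset Printing Implicit Defensive.
Import GRing.Theory.

(* Sum-matroids over a product of lattices of subspaces P(K_1^{n_1}) x ... x P(K_l^{n_l}).
   The ambient spaces K_i^{n_i} are the row spaces 'rV[K i]_(n i). *)

Section SumMatroid.
Variables (l : nat) (K : 'I_l -> finFieldType) (n : 'I_l -> nat).

Definition lat := forall i : 'I_l, {vspace 'rV[K i]_(n i)}.

Definition lat_le (L L' : lat) : Prop := forall i, (L i <= L' i)%VS.
Definition lat_add (L L' : lat) : lat := fun i => (L i + L' i)%VS.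
Definition lat_cap (L L' : lat) : lat := fun i => (L i :&: L' i)%VS.
Definition lat_full : lat := fun i => fullv.

Definition Rk (L : lat) : nat := \sum_(i < l) \dim (L i).

Definition is_sum_matroid (rho : lat -> nat) : Prop :=
  (forall L, rho L <= Rk L) /\
  (forall L L', lat_le L L' -> rho L <= rho L') /\
  (forall L L', rho (lat_add L L') + rho (lat_cap L L') <= rho L + rho L').

Definition nullity (rho : lat -> nat) (L : lat) : nat := Rk L - rho L.

Definition is_gen_weight (rho : lat -> nat) (i d : nat) : Prop :=
  (exists L, nullity rho L = i /\ Rk L = d) /\
  (forall L, nullity rho L = i -> d <= Rk L).

End SumMatroid.

From HB Require Import structures.
From mathcomp Require Import all_boot all_order all_algebra all_field.
From Stdlib Require Import Classical.
From Stdlib Require Wf_nat.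
From mathcomp Require Import zify.
Set Implicit Arguments. Unset Strict Implicit. Unset Printing Implicit Defensive.

(* Only (R1) and (R2) matter.  Dropping one dimension from some component of [L]
   lowers [Rk] by one and cannot raise [rho], so the nullity drops by at most one.
   Hence, below any [L], the nullity takes every value between 0 and
   [nullity rho L].  If [L] realises [d_j], removing one dimension and then
   descending to nullity [i < j] yields a lattice element of rank [< d_j] and
   nullity [i], so [d_i < d_j]. *)

Section Hyperspace.
Variables (F : fieldType) (vT : vectType F).

Definition hyperspace (V : {vspace vT}) : {vspace vT} := <<behead (vbasis V)>>%VS.

Lemma hyperspace_subv (V : {vspace vT}) : (hyperspace V <= V)%VS.
Proof. by apply/span_subvP => v /mem_behead /vbasis_mem. Qed.

Lemma dim_hyperspace (V : {vspace vT}) :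
  (0 < \dim V)%N -> \dim V = (\dim (hyperspace V)).+1.
Proof.
move=> dimV_gt0; have := basis_free (vbasisP V); have := size_tuple (vbasis V).
rewrite /hyperspace; case: (tval (vbasis V)) => [|v B] /= sizeB.
  by rewrite -sizeB in dimV_gt0.
by rewrite free_cons => /andP[_ /eqP ->]; rewrite sizeB.
Qed.

End Hyperspace.

Lemma exists_nat_min (P : nat -> Prop) :
  (exists m, P m) -> exists m, P m /\ forall k, P k -> (m <= k)%N.
Proof.
move=> exP; have [m [[Pm m_min] _]] :=
  @Wf_nat.dec_inh_nat_subset_has_unique_least_element P (fun k => classic (P k)) exP.
by exists m; split=> // k /m_min /leP.
Qed.

Section SumMatroidNullity.
Variables (l : nat) (K : 'I_l -> finFieldType) (n : 'I_l -> nat).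
Variable rho : lat K n -> nat.
Hypothesis rho_le_Rk : forall L, (rho L <= Rk L)%N.
Hypothesis rho_monotone : forall L L', lat_le L L' -> (rho L <= rho L')%N.

Lemma lat_le_refl (L : lat K n) : lat_le L L.
Proof. by move=> i; apply: subvv. Qed.

Lemma lat_le_trans (L1 L2 L3 : lat K n) :
  lat_le L1 L2 -> lat_le L2 L3 -> lat_le L1 L3.
Proof. by move=> le12 le23 i; apply: subv_trans (le12 i) (le23 i). Qed.

Lemma Rk_monotone (L L' : lat K n) : lat_le L L' -> (Rk L <= Rk L')%N.
Proof. by move=> leLL'; apply: leq_sum => i _; apply: dimvS. Qed.

Lemma exists_lat_Rk_pred (L : lat K n) : (0 < Rk L)%N ->
  exists2 L', lat_le L' L & Rk L = (Rk L').+1.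
Proof.
move=> RkL_gt0; have [i dimLi_gt0 | dimL0] := pickP (fun i => 0 < \dim (L i))%N;
  last first.
  by move: RkL_gt0; rewrite /Rk big1 // => i _; apply/eqP; rewrite -leqn0 leqNgt dimL0.
pose L' : lat K n := fun k => if k == i then hyperspace (L k) else L k.
exists L'.
  by move=> k; rewrite /L'; case: eqP => _; [apply: hyperspace_subv | apply: subvv].
rewrite /Rk (bigD1 i) //= [in RHS](bigD1 i) //= /L' eqxx (dim_hyperspace dimLi_gt0) addSn.
by congr (_ + _).+1; apply: eq_bigr => k /negbTE ->.
Qed.

Lemma nullity_Rk_pred (L L' : lat K n) : lat_le L' L -> Rk L = (Rk L').+1 ->
  (nullity rho L <= (nullity rho L').+1)%N.
Proof.
move=> leL'L RkL; have := rho_monotone leL'L; have := rho_le_Rk L'.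
rewrite /nullity RkL; lia.
Qed.

Lemma nullity_le_Rk (L : lat K n) : (nullity rho L <= Rk L)%N.
Proof. exact: leq_subr. Qed.

Lemma exists_lat_nullity (L : lat K n) m : (m <= nullity rho L)%N ->
  exists2 L', lat_le L' L & nullity rho L' = m.
Proof.
have [r] := ubnP (Rk L); elim: r L => // r IH L /ltnSE RkL_le m_le.
have [m_lt | m_eq] := ltnP m (nullity rho L); last first.
  by exists L; [apply: lat_le_refl | apply/eqP; rewrite eqn_leq m_le m_eq].
have RkL_gt0 : (0 < Rk L)%N by have := nullity_le_Rk L; lia.
have [L' leL'L RkL] := exists_lat_Rk_pred RkL_gt0.
have [|| L'' leL''L' <-] := IH L'; first lia.
  by have := nullity_Rk_pred leL'L RkL; lia.
by exists L''; first exact: lat_le_trans leL''L' leL'L.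
Qed.

Lemma exists_gen_weight i : (exists L, nullity rho L = i) ->
  exists d, is_gen_weight rho i d.
Proof.
case=> L nullL.
have [|d [[L' [nullL' RkL']] d_min]] :=
  exists_nat_min (P := fun d => exists L, nullity rho L = i /\ Rk L = d).
  by exists (Rk L), L.
by exists d; split=> [|L'' nullL'']; [exists L' | apply: d_min; exists L''].
Qed.

Lemma gen_weight_ltn i j di dj : (i < j)%N ->
  is_gen_weight rho i di -> is_gen_weight rho j dj -> (di < dj)%N.
Proof.
move=> ltij [_ di_min] [[L [nullL RkL]] _].
have RkL_gt0 : (0 < Rk L)%N by have := nullity_le_Rk L; lia.
have [L' leL'L RkL'] := exists_lat_Rk_pred RkL_gt0.
have [|L'' leL''L' nullL''] := @exists_lat_nullity L' i.
  by have := nullity_Rk_pred leL'L RkL'; lia.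
by have := di_min _ nullL''; have := Rk_monotone leL''L'; lia.
Qed.

End SumMatroidNullity.

Theorem mainTheorem9 (l : nat) (K : 'I_l -> finFieldType) (n : 'I_l -> nat)
  (hl : (0 < l)%N) (hn : forall i, (0 < n i)%N)
  (rho : lat K n -> nat) (hrho : is_sum_matroid rho) :
  let N := nullity rho (lat_full K n) in
  (forall i, (1 <= i <= N)%N -> exists d, is_gen_weight rho i d) /\
  (forall i j di dj, (1 <= i)%N -> (i < j)%N -> (j <= N)%N ->
     is_gen_weight rho i di -> is_gen_weight rho j dj -> (di < dj)%N).
Proof.
have [rho_le_Rk [rho_monotone _]] := hrho.
move=> N; split=> [i /andP[_ le_iN] | i j di dj _ ltij _].
  apply: exists_gen_weight.
  by have [L _ nullL] := exists_lat_nullity rho_le_Rk rho_monotone le_iN; exists L.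
exact: (gen_weight_ltn rho_le_Rk rho_monotone ltij).
Qed.
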